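(* Let $\mathcal S\subset\mathbb Z^2$ be a finite step set with weights $(\omega_s)_{s\in\mathcal S}$, let $t_c>0$, and let $\rho>0$ be irrational. Let $q:\mathbb N^2\times\mathbb N\to\mathbb C$, $(x,n)\mapsto q(x;n)$, extended by $q(y;n)=0$ for $y\notin\mathbb N^2$, satisfy $$q(x;n+1)=\sum_{s\in\mathcal S}\omega_s\,q(x-s;n)\qquad\text{for all }x\in\mathbb N^2,\ n\ge0,$$ and suppose there are functions $v_{k,\ell,m}:\mathbb N^2\to\mathbb C$ (integers $k\ge1$, $\ell\ge m\ge0$) such that for every $p>0$ and every $x\in\mathbb N^2$, $$q(x;n)=t_c^{-n}\sum_{\substack{k\ge1,\ \ell\ge m\ge0\\ k\rho+\ell+1<p}}v_{k,\ell,m}(x)\frac{(\log n)^m}{n^{k\rho+\ell+1}}+\mathcal O\!\left(t_c^{-n}\left(\frac{\log n}{n}\right)^p\right)\quad(n\to\infty).$$ Then each $v_{k,\ell,m}$ is $t_c$-polyharmonic of order $\ell-m+1$, i.e. $\Delta^{\ell-m+1}v_{k,\ell,m}\equiv0$ on $\mathbb N^2$.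
   Context: $\Delta$ acts on functions $w:\mathbb N^2\to\mathbb C$ by $(\Delta w)(A)=\sum_{s\in\mathcal S}\omega_s\,w(A-s)-t_c^{-1}w(A)$ for $A\in\mathbb N^2$, with the convention $w(B)=0$ for $B\notin\mathbb N^2$; $\Delta^r$ is the $r$-fold iterate of this operator. *)

From HB Require Import structures.
From mathcomp Require Import all_boot all_order all_algebra.
From mathcomp Require Import complex.
From mathcomp Require Import all_classical all_reals all_analysis.
Set Implicit Arguments. Unset Strict Implicit. Unset Printing Implicit Defensive.
Import Order.TTheory GRing.Theory Num.Theory ComplexField.
Local Open Scope ring_scope.
Local Open Scope complex_scope.

Definition step := (int * int)%type.

Definition ext0 {R : rcfType} (w : nat -> nat -> R[i]) (a b : int) : R[i] :=
  if (0 <= a) && (0 <= b) then w `|a|%N `|b|%N else 0.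

Definition Delta {R : rcfType} (S : seq step) (omega : step -> R) (tc : R)
  (w : nat -> nat -> R[i]) : nat -> nat -> R[i] :=
  fun a b => \sum_(s <- S) (omega s)%:C * ext0 w (a%:Z - s.1) (b%:Z - s.2)
             - (tc^-1)%:C * w a b.

Definition Delta_iter {R : rcfType} (S : seq step) (omega : step -> R) (tc : R)
  (r : nat) (w : nat -> nat -> R[i]) : nat -> nat -> R[i] :=
  iter r (Delta S omega tc) w.

(* The index range is finite; K = truncn (p + p/rho) + 1 exceeds every
   admissible k and l, so the filtered sum over k,l < K is the full sum. *)
Definition asym_sum {R : realType} (rho p : R)
  (v : nat -> nat -> nat -> nat -> nat -> R[i]) (x1 x2 n : nat) : R[i] :=
  let K := (Num.truncn (p + p / rho)).+1 in
  \sum_(k < K) \sum_(l < K) \sum_(m < l.+1 |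
        (1 <= k)%N && (k%:R * rho + l%:R + 1 < p))
     v k l m x1 x2 *
     ((ln (n%:R : R)) ^+ m / (n%:R : R) `^ (k%:R * rho + l%:R + 1))%:C.

(* Put [E(x, n) = tc ^ n q(x, n)]; the recurrence becomes
   [E(n + 1) - E(n) = tc * Delta E(n)], and [E] has the expansion
   [sum v_{k,l,m}(x) (ln n)^m / n^(k rho + l + 1)] up to [O((ln n / n)^P)].
   Taylor-expanding [(ln (n + 1))^m / (n + 1)^b] only produces terms
   [(ln n)^i / n^(b + j)] with [j >= 1] and [i <= m], so both sides of the
   recurrence are expanded in the same scale.  As [rho] is irrational,
   [k rho + l + 1] determines [(k, l)]; the functions [(ln n)^i / n^b] are then
   asymptotically independent, and comparing coefficients expresses
   [tc * Delta v_{k,l,i}] as a combination of the [v_{k,l',m}] with [l' < l] and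
   [m >= i].  Induction on [l] gives [Delta^(l - i + 1) v_{k,l,i} = 0]. *)

From HB Require Import structures.
From mathcomp Require Import all_boot all_order all_algebra.
From mathcomp Require Import complex.
From mathcomp Require Import all_classical all_reals all_analysis.
From mathcomp Require Import ring lra zify.
Import Order.TTheory GRing.Theory Num.Theory ComplexField.
Set Implicit Arguments. Unset Strict Implicit. Unset Printing Implicit Defensive.
Local Open Scope ring_scope.

Section Taylor.
Variable R : realType.

Definition taylor_poly (f : nat -> R -> R) (x0 : R) (J : nat) (t : R) : R :=
  \sum_(j < J) f j x0 * (t - x0) ^+ j / j`!%:R.

Lemma taylor_poly_at (f : nat -> R -> R) (x0 : R) (J : nat) :
  taylor_poly f x0 J.+1 x0 = f 0%N x0.
Proof.
rewrite /taylor_poly big_ord_recl /= expr0 fact0 divr1 mulr1 big1 ?addr0 //.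
by move=> i _; rewrite subrr expr0n /= mulr0 mul0r.
Qed.

Lemma is_derive_taylor_poly (f : nat -> R -> R) (x0 : R) (J : nat) (t : R) :
  is_derive t 1 (taylor_poly f x0 J.+1) (taylor_poly (fun j => f j.+1) x0 J t).
Proof.
elim: J => [|J IH].
  have -> : taylor_poly f x0 1 = cst (f 0%N x0).
    by apply/funext => s; rewrite /taylor_poly big_ord1 expr0 mulr1 fact0 divr1.
  by rewrite /taylor_poly big_ord0; apply: is_derive_cst.
set c := f J.+1 x0 / J.+1`!%:R.
have -> : taylor_poly f x0 J.+2 =
    taylor_poly f x0 J.+1 + c *: ((@id R - cst x0) ^+ J.+1 : R -> R).
  apply/funext => s; rewrite /taylor_poly big_ord_recr /= !fctE.
  by congr (_ + _); rewrite /GRing.scale /= mulrAC.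
rewrite [X in is_derive _ _ _ X]/taylor_poly big_ord_recr /=.
apply: is_deriveD; apply: is_derive_eq.
rewrite /= subr0 scaler1 /c factS natrM /GRing.scale /= !fctE /=.
have h1 : (1 + J%:R : R) != 0 by rewrite addrC natr1 pnatr_eq0.
have h2 : (J`!%:R : R) != 0 by rewrite pnatr_eq0 -lt0n fact_gt0.
by field; rewrite h1 h2.
Qed.

(* Induction on [J]: apply the mean value theorem to the remainder, whose
   derivative is the remainder of the shifted family [f j.+1]. *)
Lemma taylor_remainder_le (J : nat) (f : nat -> R -> R) (x0 x1 M : R) :
  (forall j t, x0 <= t <= x1 -> is_derive t 1 (f j) (f j.+1 t)) ->
  (forall t, x0 <= t <= x1 -> `|f J t| <= M) ->
  forall t, x0 <= t <= x1 -> `|f 0%N t - taylor_poly f x0 J t| <= M * (t - x0) ^+ J.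
Proof.
elim: J f M => [|J IH] f M hd hM t ht.
  by rewrite /taylor_poly big_ord0 subr0 expr0 mulr1; apply: hM.
have [xt tx] := andP ht.
have sub_it u : u \in `[x0, t] -> x0 <= u <= x1.
  by rewrite in_itv /= => /andP[-> /le_trans->].
set rem := fun s => f 0%N s - taylor_poly f x0 J.+1 s.
set drem := fun s => f 1%N s - taylor_poly (fun j => f j.+1) x0 J s.
have hrem s : x0 <= s <= x1 -> is_derive s 1 rem (drem s).
  move=> hs; rewrite /rem /drem.
  have -> : (fun s0 => f 0%N s0 - taylor_poly f x0 J.+1 s0) =
            f 0%N - taylor_poly f x0 J.+1 by apply/funext => u; rewrite !fctE.
  exact: is_deriveB (hd 0%N s hs) (is_derive_taylor_poly f x0 J s).
have [c cin ceq] : exists2 c, c \in `[x0, t] & rem t - rem x0 = drem c * (t - x0).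
  apply: MVT_segment => //.
    by move=> u /subset_itv_oo_cc/sub_it/hrem.
  by apply: derivable_within_continuous => u /sub_it/hrem [].
have hc := sub_it c cin.
move: cin; rewrite in_itv /= => /andP[xc ct].
move: ceq; rewrite /rem taylor_poly_at subrr subr0 => ->.
rewrite normrM (@ger0_norm _ (t - x0)) ?subr_ge0 // exprS mulrCA mulrC.
apply: ler_wpM2l; first by rewrite subr_ge0.
apply: le_trans (IH (fun j => f j.+1) M (fun j => hd j.+1) hM c hc) _.
have M0 : 0 <= M by apply: le_trans (hM t ht).
apply: ler_wpM2l => //; apply: lerXn2r; rewrite ?nnegrE ?subr_ge0 //.
by rewrite lerD2r.
Qed.

End Taylor.

Section LogScale.
Variable R : realType.

Definition logpow (b : R) (i n : nat) : R := ln (n%:R : R) ^+ i / (n%:R : R) `^ b.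

(* Beyond [Ne] we have [n >= 2] and [ln n >= 1]. *)
Definition Ne : nat := (Num.truncn (expR (1 : R))).+2.

Lemma ln_ge1 (n : nat) : (Ne <= n)%N -> 1 <= ln (n%:R : R).
Proof.
move=> hn; have e1 : expR (1 : R) <= n%:R.
  by apply: le_trans (ltW (truncnS_gt _)) _; rewrite ler_nat (leq_trans _ hn).
rewrite -[leLHS](expRK 1) ler_ln ?posrE ?expR_gt0 //.
exact: lt_le_trans (expR_gt0 1) e1.
Qed.

Lemma ln_succ_le (n : nat) : (2 <= n)%N -> ln (n.+1%:R : R) <= 2 * ln (n%:R : R).
Proof.
move=> hn; have n0 : (0 : R) < n%:R by rewrite ltr0n (leq_trans _ hn).
rewrite mulr_natl -lnXn // ler_ln ?posrE ?ltr0n ?exprn_gt0 // -natrX ler_nat.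
by case: n hn {n0} => [|[|n]] //= _; rewrite -addn1 expnS mulSn; nia.
Qed.

Lemma logpow_ge0 (b : R) (i n : nat) : 0 <= logpow b i n.
Proof.
rewrite /logpow divr_ge0 ?powR_ge0 //.
case: n => [|n]; first by rewrite ln0 // expr0n; case: i.
by apply/exprn_ge0/ln_ge0; rewrite ler1n.
Qed.

Lemma logpow_gt0 (b : R) (i n : nat) : (Ne <= n)%N -> 0 < logpow b i n.
Proof.
move=> hn; have n0 : (0 : R) < n%:R by rewrite ltr0n (leq_trans _ hn).
by rewrite /logpow divr_gt0 ?powR_gt0 // exprn_gt0 // (lt_le_trans ltr01 (ln_ge1 hn)).
Qed.

Lemma logpow_succ_le (b : R) (i n : nat) : 0 <= b -> (Ne <= n)%N ->
  logpow b i n.+1 <= 2 ^+ i * logpow b i n.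
Proof.
move=> b0 hn; have n2 : (2 <= n)%N by apply: leq_trans hn.
have n0 : (0 : R) < n%:R by rewrite ltr0n (leq_trans _ n2).
rewrite /logpow mulrA -exprMn; apply: ler_pM.
- by apply/exprn_ge0/ln_ge0; rewrite ler1n.
- by rewrite invr_ge0 powR_ge0.
- apply: lerXn2r; rewrite ?nnegrE ?ln_ge0 ?ler1n ?ln_succ_le //.
  by rewrite mulr_ge0 // (le_trans ler01 (ln_ge1 hn)).
- rewrite lef_pV2 ?posrE ?powR_gt0 ?ltr0n //.
  apply: ge0_ler_powR; rewrite ?nnegrE ?ler0n ?ler_nat ?leqnSn //.
  exact: leq_trans _ n2.
Qed.

(* The [j]-th derivative of [t |-> ln t ^+ m * t `^ (- a)] is
   [logpow_deriv a m j], a polynomial in [ln t] times [t `^ (- (a + j))]. *)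
Fixpoint logpow_deriv_poly (a : R) (m j : nat) : {poly R} :=
  if j is j'.+1 then
    (logpow_deriv_poly a m j')^`() - (a + j'%:R) *: logpow_deriv_poly a m j'
  else 'X^m.

Definition logpow_deriv (a : R) (m j : nat) (t : R) : R :=
  (logpow_deriv_poly a m j).[ln t] * t `^ (- (a + j%:R)).

Lemma size_logpow_deriv_poly (a : R) (m j : nat) :
  (size (logpow_deriv_poly a m j) <= m.+1)%N.
Proof.
elim: j => [|j IH] /=; first by rewrite size_polyXn.
apply: leq_trans (size_polyD _ _) _; rewrite geq_max; apply/andP; split.
  have [->|p0] := eqVneq (logpow_deriv_poly a m j) 0; first by rewrite deriv0 size_poly0.
  exact: leq_trans (ltnW (lt_size_deriv p0)) IH.
by rewrite size_polyN; apply: leq_trans (size_scale_leq _ _) IH.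
Qed.

Lemma logpow_deriv0 (a : R) (m n : nat) : logpow_deriv a m 0 n%:R = logpow a m n.
Proof. by rewrite /logpow_deriv /logpow /= hornerXn addr0 powRN. Qed.

Lemma is_derive_logpow_deriv (a : R) (m j : nat) (t : R) : 0 < t ->
  is_derive t 1 (logpow_deriv a m j) (logpow_deriv a m j.+1 t).
Proof.
move=> t0; set p := logpow_deriv_poly a m j; set e := - (a + j%:R).
have -> : logpow_deriv a m j = (horner p \o @ln R) * (@powR R)^~ e.
  by apply/funext => s; rewrite /logpow_deriv !fctE.
have dlog := is_derive1_comp (is_derive_poly p (ln t)) (is_derive1_ln t0).
have dpow := is_derive1_powR e t0.
apply: is_derive_eq.
have tV : t `^ e * t^-1 = t `^ (e - 1).
  by rewrite -powR_inv1 ?(ltW t0) // -powRD // (gt_eqF t0) implybT.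
rewrite /logpow_deriv /= hornerD hornerN hornerZ /GRing.scale /= -natr1.
have -> : - (a + (j%:R + 1)) = e - 1 by rewrite addrA opprD.
rewrite -tV -/p /e; ring.
Qed.

Lemma horner_le (p : {poly R}) (m : nat) (y : R) :
  (size p <= m.+1)%N -> 1 <= y ->
  `|p.[y]| <= (\sum_(i < size p) `|p`_i|) * y ^+ m.
Proof.
move=> hs y1; rewrite horner_coef mulr_suml.
apply: le_trans (ler_norm_sum _ _ _) _.
apply: ler_sum => i _; rewrite normrM normrX (ger0_norm (le_trans ler01 y1)).
apply: ler_wpM2l => //; apply: ler_weXn2l => //.
by rewrite -ltnS; apply: leq_trans (ltn_ord i) hs.
Qed.

Lemma logpow_deriv_le (a : R) (m j n : nat) (s : R) : 0 <= a -> (Ne <= n)%N ->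
  n%:R <= s <= n.+1%:R ->
  `|logpow_deriv a m j s| <=
    (\sum_(i < size (logpow_deriv_poly a m j)) `|(logpow_deriv_poly a m j)`_i|)
    * 2 ^+ m * logpow (a + j%:R) m n.
Proof.
move=> a0 hn /andP[s1 s2].
have n2 : (2 <= n)%N by apply: leq_trans hn.
have n0 : (0 : R) < n%:R by rewrite ltr0n (leq_trans _ n2).
have s0 : 0 < s by exact: lt_le_trans s1.
have l1 : 1 <= ln s by apply: le_trans (ln_ge1 hn) _; rewrite ler_ln ?posrE.
have l2 : ln s <= 2 * ln (n%:R : R).
  by apply: le_trans (ln_succ_le n2); rewrite ler_ln ?posrE ?ltr0n.
rewrite /logpow_deriv normrM (ger0_norm (powR_ge0 _ _)) /logpow mulrA.
apply: ler_pM; rewrite ?powR_ge0 //.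
  apply: le_trans (horner_le (size_logpow_deriv_poly a m j) l1) _.
  rewrite -mulrA; apply: ler_wpM2l; first exact: sumr_ge0.
  rewrite -exprMn; apply: lerXn2r; rewrite ?nnegrE ?(le_trans ler01 l1) //.
  by rewrite mulr_ge0 // ln_ge0 // ler1n (leq_trans _ n2).
rewrite powRN lef_pV2 ?posrE ?powR_gt0 //.
by apply: ge0_ler_powR; rewrite ?nnegrE ?addr_ge0 ?(ltW n0) ?(ltW s0).
Qed.

(* The coefficient of [logpow (a + j) i n] in the Taylor expansion of
   [logpow a m] from [n] to [n + 1]. *)
Definition taylor_coef (a : R) (m j i : nat) : R :=
  if (0 < j)%N && (i <= m)%N then (logpow_deriv_poly a m j)`_i / j`!%:R else 0.

Lemma taylor_poly_logpow (a : R) (m J M n : nat) : (m < M)%N -> (0 < n)%N ->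
  taylor_poly (logpow_deriv a m) n%:R J.+1 n.+1%:R =
  logpow a m n + \sum_(j < J.+1) \sum_(i < M) taylor_coef a m j i * logpow (a + j%:R) i n.
Proof.
move=> mM n0.
rewrite /taylor_poly big_ord_recl [X in _ = _ + X]big_ord_recl /=.
rewrite -natr1 addrAC subrr add0r expr0 fact0 divr1 mulr1 logpow_deriv0.
rewrite [X in _ = _ + (X + _)]big1 ?add0r; last by move=> i _; rewrite /taylor_coef mul0r.
congr (_ + _); apply: eq_bigr => j _; rewrite expr1n mulr1.
rewrite /logpow_deriv (horner_coef_wide _ (leq_trans (size_logpow_deriv_poly _ _ _) mM)).
rewrite !mulr_suml; apply: eq_bigr => i _; rewrite /taylor_coef /=.
case: leqP => hi; first by rewrite /logpow powRN; ring.
rewrite nth_default ?mul0r //.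
exact: leq_trans (size_logpow_deriv_poly a m j.+1) hi.
Qed.

Lemma logpow_succ_expansion (a : R) (m J M : nat) : 0 <= a -> (m < M)%N ->
  exists C : R, forall n, (Ne <= n)%N ->
  `| logpow a m n.+1 - logpow a m n -
     \sum_(j < J.+1) \sum_(i < M) taylor_coef a m j i * logpow (a + j%:R) i n |
     <= C * logpow (a + J.+1%:R) m n.
Proof.
move=> a0 mM; set p := logpow_deriv_poly a m J.+1.
exists ((\sum_(i < size p) `|p`_i|) * 2 ^+ m) => n hn.
have n0 : (0 < n)%N by apply: leq_trans hn.
have hd (j : nat) (s : R) : n%:R <= s <= n.+1%:R ->
    is_derive s 1 (logpow_deriv a m j) (logpow_deriv a m j.+1 s).
  by case/andP => s1 _; apply/is_derive_logpow_deriv/(lt_le_trans _ s1); rewrite ltr0n.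
have hM (s : R) : n%:R <= s <= n.+1%:R -> `|logpow_deriv a m J.+1 s| <=
    (\sum_(i < size p) `|p`_i|) * 2 ^+ m * logpow (a + J.+1%:R) m n.
  exact: logpow_deriv_le.
have hn1 : n%:R <= (n.+1%:R : R) <= n.+1%:R by rewrite lexx andbT ler_nat.
have := taylor_remainder_le hd hM hn1.
rewrite -natr1 addrAC subrr add0r expr1n mulr1 natr1 logpow_deriv0.
by rewrite (@taylor_poly_logpow a m J M n mM n0) opprD addrA.
Qed.

End LogScale.

Section Negligible.
Variable R : realType.

Definition limsup_nonpos (u : nat -> R) :=
  forall e : R, 0 < e -> exists N, forall n, (N <= n)%N -> u n <= e.

Lemma limsup_nonpos0 : limsup_nonpos (fun _ => 0).
Proof. by move=> e e0; exists 0%N => n _; exact: ltW. Qed.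

Lemma limsup_nonposD (u v : nat -> R) :
  limsup_nonpos u -> limsup_nonpos v -> limsup_nonpos (fun n => u n + v n).
Proof.
move=> hu hv e e0; have e2 : 0 < e / 2 by rewrite divr_gt0.
have [N1 h1] := hu _ e2; have [N2 h2] := hv _ e2.
exists (maxn N1 N2) => n; rewrite geq_max => /andP[n1 n2].
by rewrite (splitr e); apply: lerD; [apply: h1|apply: h2].
Qed.

Lemma limsup_nonposZ (c : R) (u : nat -> R) :
  0 <= c -> limsup_nonpos u -> limsup_nonpos (fun n => c * u n).
Proof.
rewrite le_eqVlt => /orP[/eqP <-|c0] hu e e0.
  by exists 0%N => n _; rewrite mul0r ltW.
have [N h] := hu (e / c) (divr_gt0 e0 c0).
by exists N => n hn; rewrite -ler_pdivlMl // mulrC; apply: h.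
Qed.

Lemma limsup_nonpos_le (u v : nat -> R) :
  (exists N, forall n, (N <= n)%N -> v n <= u n) ->
  limsup_nonpos u -> limsup_nonpos v.
Proof.
move=> [N hN] hu e e0; have [M hM] := hu e e0.
exists (maxn N M) => n; rewrite geq_max => /andP[n1 n2].
exact: le_trans (hN n n1) (hM n n2).
Qed.

Lemma limsup_nonpos_sum (I : Type) (s : seq I) (P : pred I) (f : I -> nat -> R) :
  (forall i, P i -> limsup_nonpos (f i)) ->
  limsup_nonpos (fun n => \sum_(i <- s | P i) f i n).
Proof.
move=> hf; elim: s => [|x s IH].
  by apply: limsup_nonpos_le limsup_nonpos0; exists 0%N => n _; rewrite big_nil.
case Px: (P x); last by apply: limsup_nonpos_le IH; exists 0%N => n _; rewrite big_cons Px.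
apply: limsup_nonpos_le (limsup_nonposD (hf x Px) IH).
by exists 0%N => n _; rewrite big_cons Px.
Qed.

Lemma limsup_nonpos_ge (u : nat -> R) (c : R) : limsup_nonpos u ->
  (exists N, forall n, (N <= n)%N -> c <= u n) -> c <= 0.
Proof.
move=> hu [N hN]; rewrite leNgt; apply/negP => c0.
have [M hM] := hu (c / 2) (divr_gt0 c0 (ltr0Sn _ 1)).
have := le_trans (hN (maxn N M) (leq_maxl _ _)) (hM _ (leq_maxr _ _)).
lra.
Qed.

Lemma limsup_nonpos_powRN (e : R) : 0 < e -> limsup_nonpos (fun n => (n%:R : R) `^ (- e)).
Proof.
move=> e0 eps eps0; set X := eps^-1 `^ e^-1.
exists (Num.truncn X).+1 => n hn.
have Xn : X <= n%:R by apply: le_trans (ltW (truncnS_gt _)) _; rewrite ler_nat.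
have n0 : (0 : R) < n%:R by apply: lt_le_trans Xn; rewrite powR_gt0 // invr_gt0.
have : eps^-1 <= (n%:R : R) `^ e.
  have -> : eps^-1 = X `^ e by rewrite /X -powRrM mulVf ?gt_eqF // powRr1 // invr_ge0 ltW.
  by apply: ge0_ler_powR; rewrite ?nnegrE ?(ltW e0) ?(ltW n0) ?powR_ge0.
by rewrite powRN -[leRHS]invrK lef_pV2 ?posrE ?invr_gt0 ?powR_gt0.
Qed.

Lemma limsup_nonpos_lnV : limsup_nonpos (fun n => (ln (n%:R : R))^-1).
Proof.
move=> eps eps0; exists (Num.truncn (expR eps^-1)).+1 => n hn.
have Xn : expR eps^-1 < n%:R by apply: lt_le_trans (truncnS_gt _) _; rewrite ler_nat.
have n0 : (0 : R) < n%:R by apply: lt_trans Xn; exact: expR_gt0.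
have h : eps^-1 < ln (n%:R : R) by rewrite -[ltLHS]expRK ltr_ln ?posrE ?expR_gt0.
have l0 : 0 < ln (n%:R : R) by apply: lt_trans h; rewrite invr_gt0.
by rewrite -[leRHS]invrK lef_pV2 ?posrE ?invr_gt0 // ltW.
Qed.

(* From [ln y < y] applied to [y = x `^ (d / (2 j))]. *)
Lemma ln_expn_le (d : R) (j : nat) (x : R) : 0 < d -> 1 <= x ->
  ln x ^+ j <= (2 * j%:R / d) ^+ j * x `^ (d / 2).
Proof.
move=> d0 x1; have x0 : 0 < x by exact: lt_le_trans ltr01 x1.
case: j => [|j].
  rewrite !expr0 mul1r -[leLHS](powRr0 x).
  by apply: ler_powR => //; rewrite divr_ge0 // ltW.
set c := d / 2 / j.+1%:R.
have c0 : 0 < c by rewrite /c !divr_gt0.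
have hl : ln x <= c^-1 * x `^ c.
  rewrite -[leLHS]mul1r -(@mulVf _ c) ?gt_eqF // -mulrA -ln_powR.
  by apply: ler_wpM2l; rewrite ?invr_ge0 ?ltW // ln_sublinear // powR_gt0.
have -> : x `^ (d / 2) = (x `^ c) ^+ j.+1.
  by rewrite -powR_mulrn ?powR_ge0 // -powRrM /c mulfVK // pnatr_eq0.
rewrite -exprMn; apply: lerXn2r; rewrite ?nnegrE ?ln_ge0 //.
  by rewrite mulr_ge0 ?powR_ge0 // divr_ge0 // ltW.
apply: le_trans hl _; apply: ler_wpM2r; first exact: powR_ge0.
rewrite [leLHS](_ : _ = 2 * j.+1%:R / d) //; rewrite /c; field.
by rewrite (gt_eqF d0) /= addrC natr1 pnatr_eq0.
Qed.

Lemma limsup_nonpos_logpow (d : R) (j : nat) : 0 < d -> limsup_nonpos (logpow d j).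
Proof.
move=> d0.
have K0 : 0 <= (2 * j%:R / d) ^+ j by apply/exprn_ge0; rewrite divr_ge0 ?mulr_ge0 // ltW.
apply: limsup_nonpos_le (limsup_nonposZ K0 (limsup_nonpos_powRN (divr_gt0 d0 (ltr0Sn _ 1)))).
exists 1%N => n hn; have n1 : (1 : R) <= n%:R by rewrite ler1n.
have n0 : (0 : R) < n%:R by exact: lt_le_trans ltr01 n1.
rewrite /logpow ler_pdivrMr ?powR_gt0 //.
apply: le_trans (ln_expn_le j d0 n1) _.
rewrite -[leRHS]mulrA -powRD ?(gt_eqF n0) ?implybT //.
by rewrite (_ : - (d / 2) + d = d / 2) //; field.
Qed.

Lemma logpow_ratio_lt (b b' : R) (i i' : nat) : b < b' ->
  limsup_nonpos (fun n => logpow b' i' n / logpow b i n).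
Proof.
move=> bb; have db : 0 < b' - b by rewrite subr_gt0.
apply: limsup_nonpos_le (limsup_nonpos_logpow i' db).
exists (Ne R) => n hn; have l1 := ln_ge1 hn.
have n0 : (0 : R) < n%:R by rewrite ltr0n (leq_trans _ hn).
have lp : 0 < ln (n%:R : R) by exact: lt_le_trans ltr01 l1.
rewrite /logpow.
have -> : (n%:R : R) `^ b' = (n%:R) `^ (b' - b) * (n%:R) `^ b.
  by rewrite -powRD ?subrK // (gt_eqF n0) implybT.
have p1 : (n%:R : R) `^ (b' - b) != 0 by rewrite gt_eqF ?powR_gt0.
have p2 : (n%:R : R) `^ b != 0 by rewrite gt_eqF ?powR_gt0.
have p3 : ln (n%:R : R) ^+ i != 0 by rewrite gt_eqF ?exprn_gt0.
have -> : ln (n%:R : R) ^+ i' / ((n%:R) `^ (b' - b) * (n%:R) `^ b) /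
   (ln (n%:R : R) ^+ i / (n%:R) `^ b) =
   (ln (n%:R : R) ^+ i' / (n%:R) `^ (b' - b)) / ln (n%:R : R) ^+ i.
  by field; rewrite p1 p2 p3.
rewrite ler_pdivrMr ?exprn_gt0 //; apply: ler_peMr; last by rewrite exprn_ege1.
by rewrite divr_ge0 ?powR_ge0 ?exprn_ge0 ?ltW.
Qed.

Lemma logpow_ratio_ln (b : R) (i i' : nat) : (i' < i)%N ->
  limsup_nonpos (fun n => logpow b i' n / logpow b i n).
Proof.
move=> ii; apply: limsup_nonpos_le limsup_nonpos_lnV.
exists (Ne R) => n hn; have l1 := ln_ge1 hn.
have n0 : (0 : R) < n%:R by rewrite ltr0n (leq_trans _ hn).
have lp : 0 < ln (n%:R : R) by exact: lt_le_trans ltr01 l1.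
have -> : logpow b i' n / logpow b i n = (ln (n%:R : R) ^+ (i - i'))^-1.
  rewrite /logpow -{1}(subnK (ltnW ii)) exprD.
  have A0 : ln (n%:R : R) ^+ (i - i') != 0 by rewrite gt_eqF ?exprn_gt0.
  have B0 : ln (n%:R : R) ^+ i' != 0 by rewrite gt_eqF ?exprn_gt0.
  have p0 : (n%:R : R) `^ b != 0 by rewrite gt_eqF ?powR_gt0.
  by field; rewrite A0 B0 p0.
rewrite lef_pV2 ?posrE ?exprn_gt0 // -[leLHS]expr1.
by apply: ler_weXn2l => //; rewrite subn_gt0.
Qed.

End Negligible.

Local Open Scope complex_scope.

Section BigO.
Variable R : realType.

Definition isBigO (h : nat -> R) (f : nat -> R[i]) :=
  exists C : R, exists N : nat, forall n, (N <= n)%N -> `|f n| <= (C * h n)%:C.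

Lemma normc_real (r : R) : `|r%:C| = `|r|%:C.
Proof. by rewrite normc_def /= expr0n /= addr0 sqrtr_sqr. Qed.

Lemma isBigO0 (h : nat -> R) : isBigO h (fun _ => 0).
Proof. by exists 0, 0%N => n _; rewrite normr0 mul0r. Qed.

Lemma isBigOD (h : nat -> R) (f1 f2 : nat -> R[i]) :
  isBigO h f1 -> isBigO h f2 -> isBigO h (fun n => f1 n + f2 n).
Proof.
move=> [C1 [N1 h1]] [C2 [N2 h2]]; exists (C1 + C2), (maxn N1 N2) => n.
rewrite geq_max => /andP[n1 n2]; apply: le_trans (ler_normD _ _) _.
by rewrite mulrDl rmorphD /=; apply: lerD; [apply: h1|apply: h2].
Qed.

Lemma isBigOZ (h : nat -> R) (c : R[i]) (f : nat -> R[i]) :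
  isBigO h f -> isBigO h (fun n => c * f n).
Proof.
move=> [C [N hf]]; have /complex_realP[r hr] := normr_real c.
have r0 : 0 <= r by rewrite -ler0c -hr normr_ge0.
exists (r * C), N => n hn; rewrite normrM hr -mulrA rmorphM /=.
by apply: ler_wpM2l; [rewrite ler0c | exact: hf].
Qed.

Lemma isBigON (h : nat -> R) (f : nat -> R[i]) :
  isBigO h f -> isBigO h (fun n => - f n).
Proof.
by move=> /(isBigOZ (-1)) [C [N hf]]; exists C, N => n /hf; rewrite mulN1r.
Qed.

Lemma isBigO_le (h : nat -> R) (f f' : nat -> R[i]) :
  (exists N, forall n, (N <= n)%N -> `|f n| <= `|f' n|) -> isBigO h f' -> isBigO h f.
Proof.
move=> [N hN] [C [M hM]]; exists C, (maxn N M) => n.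
by rewrite geq_max => /andP[n1 n2]; exact: le_trans (hN n n1) (hM n n2).
Qed.

Lemma isBigO_ext (h : nat -> R) (f f' : nat -> R[i]) :
  (forall n, f n = f' n) -> isBigO h f' -> isBigO h f.
Proof. by move=> e; apply: isBigO_le; exists 0%N => n _; rewrite e. Qed.

Lemma isBigO_sum (h : nat -> R) (I : Type) (s : seq I) (P : pred I)
    (F : I -> nat -> R[i]) :
  (forall i, P i -> isBigO h (F i)) -> isBigO h (fun n => \sum_(i <- s | P i) F i n).
Proof.
move=> hF; elim: s => [|x s IH].
  by apply: isBigO_ext (isBigO0 h) => n; rewrite big_nil.
case Px : (P x); last by apply: isBigO_ext IH => n; rewrite big_cons Px.
by apply: isBigO_ext (isBigOD (hF x Px) IH) => n; rewrite big_cons Px.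
Qed.

Lemma isBigO_shift (P : nat) (f : nat -> R[i]) :
  isBigO (logpow P%:R P) f -> isBigO (logpow P%:R P) (fun n => f n.+1).
Proof.
move=> [C [N hf]]; exists (`|C| * 2 ^+ P), (maxn N (Ne R)) => n.
rewrite geq_max => /andP[n1 n2]; apply: le_trans (hf n.+1 (leqW n1)) _.
rewrite lecR -mulrA; apply: le_trans (ler_wpM2r (logpow_ge0 _ _ _) (ler_norm C)) _.
by apply/ler_wpM2l/logpow_succ_le; rewrite ?ler0n.
Qed.

Lemma isBigO_logpow (b : R) (m P : nat) : P%:R <= b -> (m <= P)%N ->
  isBigO (logpow P%:R P) (fun n => (logpow b m n)%:C).
Proof.
move=> bP mP; exists 1, (Ne R) => n hn; have l1 := ln_ge1 hn.
rewrite normc_real ger0_norm ?logpow_ge0 // lecR mul1r /logpow.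
apply: ler_pM; rewrite ?invr_ge0 ?powR_ge0 ?exprn_ge0 ?(le_trans ler01 l1) //.
  exact: ler_weXn2l.
rewrite lef_pV2 ?posrE ?powR_gt0 ?ltr0n ?(leq_trans _ hn) //.
by apply: ler_powR => //; rewrite ler1n (leq_trans _ hn).
Qed.

End BigO.

Section Uniqueness.
Variable R : realType.

Lemma logpow_dominant (T : finType) (bt : T -> R) (it : T -> nat) (Z : pred T) (t0 : T) :
  (forall t t', bt t = bt t' -> it t = it t' -> t = t') -> Z t0 ->
  exists t2, [/\ Z t2, bt t2 <= bt t0 & forall t, Z t -> t != t2 ->
    limsup_nonpos (fun n => logpow (bt t) (it t) n / logpow (bt t2) (it t2) n)].
Proof.
move=> inj Zt0; have [t1 Zt1 min1] := @arg_minP _ _ T t0 Z bt Zt0.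
pose Z' := [pred t | Z t && (bt t == bt t1)].
have Z't1 : Z' t1 by rewrite /= Zt1 eqxx.
have [t2 /andP[Zt2 /eqP e2] max2] := @arg_maxP _ _ T t1 Z' it Z't1.
exists t2; split => // [|t Zt tt2]; first by rewrite e2 min1.
have := min1 t Zt; rewrite -e2 le_eqVlt => /orP[/eqP eb|]; last exact: logpow_ratio_lt.
have Z't : Z' t by rewrite /= Zt -eb e2 eqxx.
have := max2 t Z't; rewrite /= le_eqVlt => /orP[/eqP ei|li].
  by move: tt2; rewrite (inj _ _ (esym eb) ei) eqxx.
by rewrite -eb; apply: logpow_ratio_ln; move: li; rewrite ltEnat.
Qed.

Lemma dominant_coef_le (T : finType) (F a : T -> R) (t2 : T) (C h : R) :
  `|\sum_t F t * a t| <= C * h -> 0 <= h -> (forall t, 0 <= a t) ->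
  `|F t2| * a t2 <= `|C| * h + \sum_(t | t != t2) `|F t| * a t.
Proof.
move=> hS h0 a0; rewrite -(ger0_norm (a0 t2)) -normrM.
move: hS; rewrite (bigD1 t2) //=; set Sr := \sum_(t | t != t2) _ => hS.
rewrite -[F t2 * a t2](addrK Sr); apply: le_trans (ler_normB _ _) _.
apply: lerD; first exact: le_trans hS (ler_wpM2r h0 (ler_norm C)).
apply: le_trans (ler_norm_sum _ _ _) _.
by apply: ler_sum => t _; rewrite normrM (ger0_norm (a0 t)).
Qed.

(* The term of least exponent (and, among those, of largest log-power) with a
   nonzero coefficient dominates all the others, and the bound. *)
Lemma logpow_coef_eq0_real (T : finType) (bt : T -> R) (it : T -> nat) (F : T -> R)
    (P : nat) (C : R) (N : nat) :
  (forall t t', bt t = bt t' -> it t = it t' -> t = t') ->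
  (forall n, (N <= n)%N ->
     `|\sum_t F t * logpow (bt t) (it t) n| <= C * logpow P%:R P n) ->
  forall t, bt t < P%:R -> F t = 0.
Proof.
move=> inj hS t0 ht0; apply/eqP/negPn/negP => hF0.
have [t2 [Zt2 b20 dom]] := @logpow_dominant T bt it [pred t | F t != 0] t0 inj hF0.
pose g t n := logpow (bt t) (it t) n.
pose u n := `|C| * (logpow P%:R P n / g t2 n) +
            \sum_(t | t != t2) `|F t| * (g t n / g t2 n).
have su : limsup_nonpos u.
  apply: limsup_nonposD.
    by apply/limsup_nonposZ/logpow_ratio_lt/(le_lt_trans b20).
  apply: limsup_nonpos_sum => t tt2.
  have [->|Ft] := eqVneq (F t) 0; last exact/limsup_nonposZ/dom.
  by apply: limsup_nonpos_le (@limsup_nonpos0 R); exists 0%N => n _; rewrite normr0 mul0r.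
suff : `|F t2| <= 0 by rewrite normr_le0 (negbTE Zt2).
apply: (limsup_nonpos_ge su); exists (maxn N (Ne R)) => n.
rewrite geq_max => /andP[n1 n2]; have g2 := logpow_gt0 (bt t2) (it t2) n2.
rewrite -(ler_pM2r g2) /u mulrDl mulr_suml -mulrA divfK ?gt_eqF //.
under eq_bigr do rewrite -mulrA divfK ?gt_eqF //.
exact: dominant_coef_le (hS n n1) (logpow_ge0 _ _ _) (fun t => logpow_ge0 _ _ _).
Qed.

Lemma Re_mul_real (z : R[i]) (r : R) : complex.Re (z * r%:C) = complex.Re z * r.
Proof. by case: z => a b /=; rewrite mulr0 subr0. Qed.

Lemma Im_mul_real (z : R[i]) (r : R) : complex.Im (z * r%:C) = complex.Im z * r.
Proof. by case: z => a b /=; rewrite mulr0 add0r. Qed.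

Lemma Re_norm_le (z : R[i]) (r : R) : `|z| <= r%:C -> `|complex.Re z| <= r.
Proof.
rewrite normc_def lecR => /(le_trans _); apply.
by rewrite -sqrtr_sqr ler_sqrt ?lerDl ?sqr_ge0 // addr_ge0 ?sqr_ge0.
Qed.

Lemma Im_norm_le (z : R[i]) (r : R) : `|z| <= r%:C -> `|complex.Im z| <= r.
Proof.
rewrite normc_def lecR => /(le_trans _); apply.
by rewrite -sqrtr_sqr ler_sqrt ?lerDr ?sqr_ge0 // addr_ge0 ?sqr_ge0.
Qed.

Lemma logpow_coef_eq0 (T : finType) (bt : T -> R) (it : T -> nat) (F : T -> R[i])
    (P : nat) :
  (forall t t', bt t = bt t' -> it t = it t' -> t = t') ->
  isBigO (logpow P%:R P) (fun n => \sum_t F t * (logpow (bt t) (it t) n)%:C) ->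
  forall t, bt t < P%:R -> F t = 0.
Proof.
move=> inj [C [N hS]] t ht.
have hRe : complex.Re (F t) = 0.
  apply: (@logpow_coef_eq0_real T bt it (fun t => complex.Re (F t)) P C N inj) => // n hn.
  have := Re_norm_le (hS n hn); rewrite raddf_sum /=.
  by under eq_bigr do rewrite Re_mul_real.
have hIm : complex.Im (F t) = 0.
  apply: (@logpow_coef_eq0_real T bt it (fun t => complex.Im (F t)) P C N inj) => // n hn.
  have := Im_norm_le (hS n hn); rewrite raddf_sum /=.
  by under eq_bigr do rewrite Im_mul_real.
by move: hRe hIm; case: (F t) => a b /= -> ->.
Qed.

Lemma logpow_coef_sum_eq0 (T : finType) (K : choiceType) (key : T -> K)
    (b : K -> R) (i : K -> nat) (F : T -> R[i]) (P : nat) :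
  (forall k k', b k = b k' -> i k = i k' -> k = k') ->
  isBigO (logpow P%:R P) (fun n => \sum_t F t * (logpow (b (key t)) (i (key t)) n)%:C) ->
  forall k, b k < P%:R -> \sum_(t | key t == k) F t = 0.
Proof.
move=> inj hO k hk.
have [t0 /eqP kt0 | none] := pickP (fun t => key t == k); last by rewrite big_pred0.
subst k.
pose s := [seq key t | t <- enum T].
have s_key t : key t \in s by rewrite map_f ?mem_enum.
pose key' t : seq_sub s := SeqSub (s_key t).
have key'E t t' : (key' t == key' t') = (key t == key t') by [].
under eq_bigl do rewrite -key'E.
pose G k := \sum_(t | key' t == k) F t.
apply: (@logpow_coef_eq0 _ (b \o val) (i \o val) G P) => //.
- by move=> k1 k2 eb ei; apply/val_inj/inj.
- apply: isBigO_ext hO => n; rewrite [RHS](partition_big key' predT) //=.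
  by apply: eq_bigr => k' _; rewrite mulr_suml; apply: eq_bigr => t /eqP <-.
Qed.

End Uniqueness.

Section DeltaLinear.
Variables (R : rcfType) (S : seq step) (omega : step -> R) (tc : R).
Local Notation D := (Delta S omega tc).
Local Notation Di := (Delta_iter S omega tc).

Lemma ext0_lin (c : R[i]) (w1 w2 : nat -> nat -> R[i]) (a b : int) :
  ext0 (fun y1 y2 => c * w1 y1 y2 + w2 y1 y2) a b = c * ext0 w1 a b + ext0 w2 a b.
Proof. by rewrite /ext0; case: ifP; rewrite ?mulr0 ?addr0. Qed.

Lemma ext0Z (c : R[i]) (w : nat -> nat -> R[i]) (a b : int) :
  ext0 (fun y1 y2 => c * w y1 y2) a b = c * ext0 w a b.
Proof. by rewrite /ext0; case: ifP; rewrite ?mulr0. Qed.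

Lemma Delta_lin (c : R[i]) (w1 w2 : nat -> nat -> R[i]) (a b : nat) :
  D (fun y1 y2 => c * w1 y1 y2 + w2 y1 y2) a b = c * D w1 a b + D w2 a b.
Proof.
rewrite /Delta; under eq_bigr do rewrite ext0_lin mulrDr mulrCA.
rewrite big_split /= -mulr_sumr.
set X := \sum_(s <- S) _; set Y := \sum_(s <- S) _.
ring.
Qed.

Lemma Delta0 (a b : nat) : D (fun _ _ => 0) a b = 0.
Proof.
rewrite /Delta big1 ?mulr0 ?subr0 //.
by move=> s _; rewrite /ext0; case: ifP; rewrite mulr0.
Qed.

Lemma Delta_sum (I : Type) (r : seq I) (P : pred I) (c : I -> R[i])
    (f : I -> nat -> nat -> R[i]) (a b : nat) :
  D (fun y1 y2 => \sum_(t <- r | P t) c t * f t y1 y2) a b =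
  \sum_(t <- r | P t) c t * D (f t) a b.
Proof.
elim: r => [|x r IH].
  rewrite big_nil -[RHS](Delta0 a b); congr Delta.
  by do 2!apply/funext => ?; rewrite big_nil.
have -> : (fun y1 y2 => \sum_(t <- x :: r | P t) c t * f t y1 y2) =
  (fun y1 y2 => if P x then c x * f x y1 y2 + \sum_(t <- r | P t) c t * f t y1 y2
                else \sum_(t <- r | P t) c t * f t y1 y2).
  by do 2!apply/funext => ?; rewrite big_cons.
by rewrite big_cons; case: (P x); rewrite ?Delta_lin IH.
Qed.

Lemma Delta_iter0 (r : nat) : Di r (fun _ _ => 0) = (fun _ _ => 0).
Proof.
elim: r => [|r IH] //; rewrite /Delta_iter iterS -/(Di r _) IH.
by do 2!apply/funext => ?; rewrite Delta0.
Qed.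

Lemma Delta_iter_sum (I : Type) (r : seq I) (P : pred I) (c : I -> R[i])
    (f : I -> nat -> nat -> R[i]) (n : nat) :
  Di n (fun y1 y2 => \sum_(t <- r | P t) c t * f t y1 y2) =
  (fun y1 y2 => \sum_(t <- r | P t) c t * Di n (f t) y1 y2).
Proof.
elim: n => [|n IH] //; rewrite /Delta_iter iterS -/(Di n _) IH.
by do 2!apply/funext => ?; rewrite Delta_sum.
Qed.

Lemma Delta_iterD (r1 r2 : nat) (w : nat -> nat -> R[i]) :
  Di (r1 + r2) w = Di r1 (Di r2 w).
Proof. by rewrite /Delta_iter iterD. Qed.

Lemma Delta_iterSr (r : nat) (w : nat -> nat -> R[i]) : Di r.+1 w = Di r (D w).
Proof. by rewrite /Delta_iter iterSr. Qed.

End DeltaLinear.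

Section Exponents.
Variables (R : numFieldType) (rho : R).

Definition expo (k l : nat) : R := k%:R * rho + l%:R + 1.

Lemma expoD (k l j : nat) : expo k (l + j) = expo k l + j%:R.
Proof. by rewrite /expo natrD; ring. Qed.

Lemma expo_ge0 (k l : nat) : 0 <= rho -> 0 <= expo k l.
Proof. by move=> r0; rewrite /expo !addr_ge0 ?mulr_ge0. Qed.

Lemma expo_inj : (forall r : rat, rho != ratr r) ->
  forall k l k' l', expo k l = expo k' l' -> k = k' /\ l = l'.
Proof.
move=> irr k l k' l' e.
have [kk|nk] := eqVneq k k'.
  by move: e; rewrite -kk /expo => /addIr /addrI /eqP; rewrite eqr_nat => /eqP.
have d0 : (k%:R - k'%:R : R) != 0 by rewrite subr_eq0 eqr_nat.
have e2 : rho = (l'%:R - l%:R) / (k%:R - k'%:R).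
  apply: (mulIf d0); rewrite divfK // mulrC; apply/eqP; rewrite -subr_eq0.
  by move/eqP: e; rewrite -subr_eq0 /expo => /eqP <-; apply/eqP; ring.
have := irr ((l'%:Q - l%:Q) / (k%:Q - k'%:Q)).
by rewrite fmorph_div !rmorphB /= !ratr_nat -e2 eqxx.
Qed.

End Exponents.

Section Polyharmonic.
Variables (R : realType) (S : seq step) (omega : step -> R) (tc rho : R)
  (q : nat -> nat -> nat -> R[i]) (v : nat -> nat -> nat -> nat -> nat -> R[i]).
Hypotheses (tc_gt0 : 0 < tc) (rho_gt0 : 0 < rho).
Hypothesis rho_irr : forall r : rat, rho != ratr r.
Hypothesis q_rec : forall x1 x2 n : nat,
  q x1 x2 n.+1 = \sum_(s <- S) (omega s)%:C *
                   ext0 (fun y1 y2 => q y1 y2 n) (x1%:Z - s.1) (x2%:Z - s.2).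
Hypothesis q_asym : forall p : R, 0 < p -> forall x1 x2 : nat,
  exists C : R, exists N : nat, forall n : nat, (N <= n)%N ->
    `| q x1 x2 n - ((tc ^- n)%:C * asym_sum rho p v x1 x2 n) |
      <= (C * tc ^- n * (ln (n%:R : R) / n%:R) `^ p)%:C.
Variable P : nat.
Hypothesis P_gt0 : (0 < P)%N.

Local Notation D := (Delta S omega tc).
Local Notation expo := (expo rho).
Local Notation err := (logpow P%:R P).

(* The bound [K] of [asym_sum] for [p = P]. *)
Definition nK : nat := (Num.truncn ((P%:R : R) + P%:R / rho)).+1.

Definition admissible (k l m : nat) := [&& (1 <= k)%N, (m <= l)%N & expo k l < P%:R].

Definition vP (k l m : nat) : nat -> nat -> R[i] :=
  if admissible k l m then v k l m else fun _ _ => 0.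

Definition Idx := ('I_nK * 'I_nK * 'I_nK)%type.

Definition expansion (x1 x2 n : nat) : R[i] :=
  \sum_(u : Idx) vP u.1.1 u.1.2 u.2 x1 x2 * (logpow (expo u.1.1 u.1.2) u.2 n)%:C.

Definition qn (x1 x2 n : nat) : R[i] := (tc ^+ n)%:C * q x1 x2 n.

Definition remainder (x1 x2 n : nat) : R[i] := qn x1 x2 n - expansion x1 x2 n.

Lemma expo_lt_nK (k l : nat) : expo k l < P%:R -> (k < nK)%N /\ (l < nK)%N.
Proof.
move=> h; have hK : (P%:R : R) + P%:R / rho < nK%:R := truncnS_gt _.
have pr0 : 0 <= (P%:R : R) / rho by rewrite divr_ge0 // ltW.
have kr0 : 0 <= k%:R * rho by rewrite mulr_ge0 ?ler0n // ltW.
have l0 : (0 : R) <= l%:R by rewrite ler0n.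
have kr : k%:R < P%:R / rho by rewrite ltr_pdivlMr //; move: h; rewrite /expo; lra.
by split; rewrite -(ltr_nat R); move: h; rewrite /expo; lra.
Qed.

Lemma asym_sumE (x1 x2 n : nat) : asym_sum rho P%:R v x1 x2 n = expansion x1 x2 n.
Proof.
have widen (l : 'I_nK) (c : bool) (f : nat -> R[i]) :
    \sum_(m < l.+1 | c) f m = \sum_(m < nK) (if (m <= l)%N && c then f m else 0).
  rewrite big_mkcond (big_ord_widen nK (fun m => if c then f m else 0)) //.
  by rewrite big_mkcond; apply: eq_bigr => m _; rewrite ltnS; case: (m <= l)%N.
rewrite /asym_sum /expansion -/nK.
under eq_bigr => k _ do under eq_bigr => l _ do
  rewrite (widen l _ (fun m : nat => v k l m x1 x2 *
     ((ln (n%:R : R)) ^+ m / (n%:R : R) `^ (k%:R * rho + l%:R + 1))%:C)).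
rewrite pair_big pair_big /=; apply: eq_bigr => [[[k l] m] _] /=.
rewrite /vP /admissible /logpow /expo.
by case: (1 <= k)%N; case: (m <= l)%N; case: (_ < _) => /=; rewrite ?mul0r.
Qed.

Lemma qn_succ (x1 x2 n : nat) :
  qn x1 x2 n.+1 = qn x1 x2 n + tc%:C * D (fun y1 y2 => qn y1 y2 n) x1 x2.
Proof.
rewrite /qn q_rec /Delta.
under [X in _ = _ + _ * (X - _)]eq_bigr => s _ do rewrite ext0Z mulrCA.
rewrite -mulr_sumr; set X := \sum_(s <- S) _.
have tc0 : tc%:C != 0 :> R[i] by apply/eqP => -[] /eqP; rewrite gt_eqF.
by rewrite exprS rmorphM /= fmorphV /=; field.
Qed.

Lemma remainder_isBigO (x1 x2 : nat) : isBigO err (remainder x1 x2).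
Proof.
have P0 : (0 : R) < P%:R by rewrite ltr0n.
have [C [N hC]] := q_asym P0 x1 x2.
exists C, (maxn N 1) => n; rewrite geq_max => /andP[n1 n2].
have tn : tc ^+ n != 0 by rewrite expf_neq0 // gt_eqF.
have -> : remainder x1 x2 n =
    (tc ^+ n)%:C * (q x1 x2 n - (tc ^- n)%:C * expansion x1 x2 n).
  by rewrite /remainder /qn mulrBr mulrA -rmorphM /= mulfV // mul1r.
rewrite normrM normc_real (ger0_norm (exprn_ge0 n (ltW tc_gt0))) -asym_sumE.
apply: le_trans (ler_wpM2l _ (hC n n1)) _; first by rewrite ler0c exprn_ge0 // ltW.
rewrite -rmorphM lecR powR_mulrn ?divr_ge0 ?ler0n ?ln_ge0 ?ler1n //.
rewrite /logpow powR_mulrn ?ler0n // expr_div_n.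
set Y := ln (n%:R : R) ^+ P / n%:R ^+ P.
by rewrite (_ : tc ^+ n * (C * tc ^- n * Y) = C * Y) //; field.
Qed.

Lemma isBigO_Delta (h : nat -> R) (W : nat -> nat -> nat -> R[i]) (x1 x2 : nat) :
  (forall y1 y2, isBigO h (W y1 y2)) ->
  isBigO h (fun n => D (fun y1 y2 => W y1 y2 n) x1 x2).
Proof.
move=> hW; rewrite /Delta; apply: isBigOD; last exact/isBigON/isBigOZ.
apply: isBigO_sum => s _; apply: isBigOZ.
case hs : ((0 <= x1%:Z - s.1) && (0 <= x2%:Z - s.2))%R.
  by apply: isBigO_ext (hW `|x1%:Z - s.1|%N `|x2%:Z - s.2|%N) => n; rewrite /ext0 hs.
by apply: isBigO_ext (isBigO0 h) => n; rewrite /ext0 hs.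
Qed.

Lemma expansion_defect (x1 x2 : nat) : isBigO err (fun n =>
  expansion x1 x2 n.+1 - expansion x1 x2 n -
  tc%:C * D (fun y1 y2 => expansion y1 y2 n) x1 x2).
Proof.
have hE := remainder_isBigO.
have := isBigOD (isBigOD (isBigON (isBigO_shift (hE x1 x2))) (hE x1 x2))
                (isBigOZ tc%:C (isBigO_Delta x1 x2 hE)).
apply: isBigO_ext => n.
have qnE : (fun y1 y2 => qn y1 y2 n) =
    (fun y1 y2 => 1 * expansion y1 y2 n + remainder y1 y2 n).
  by do 2!apply/funext => ?; rewrite /remainder mul1r addrC subrK.
have := qn_succ x1 x2 n; rewrite qnE Delta_lin mul1r /remainder => ->.
set D1 := D _ x1 x2; set D2 := D _ x1 x2; ring.
Qed.

Definition taylor_sum (k l m n : nat) : R :=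
  \sum_(j < P.+1) \sum_(i < nK) taylor_coef (expo k l) m j i * logpow (expo k l + j%:R) i n.

Lemma expansion_taylor (x1 x2 : nat) : isBigO err (fun n =>
  expansion x1 x2 n.+1 - expansion x1 x2 n -
  \sum_(u : Idx) vP u.1.1 u.1.2 u.2 x1 x2 * (taylor_sum u.1.1 u.1.2 u.2 n)%:C).
Proof.
pose rem (u : Idx) n := logpow (expo u.1.1 u.1.2) u.2 n.+1 -
  logpow (expo u.1.1 u.1.2) u.2 n - taylor_sum u.1.1 u.1.2 u.2 n.
apply: (@isBigO_ext _ _ _ (fun n => \sum_(u : Idx) vP u.1.1 u.1.2 u.2 x1 x2 * (rem u n)%:C)).
  move=> n; rewrite /expansion -!sumrB; apply: eq_bigr => u _.
  by rewrite /rem !rmorphB /= !mulrBr.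
apply: isBigO_sum => -[[k l] m] _ /=; rewrite /vP.
case: ifP => [/and3P[k1 ml hkl]|_]; last first.
  by apply: isBigO_ext (isBigO0 _) => n; rewrite mul0r.
apply: isBigOZ.
have lP : (l < P)%N.
  have kr0 : 0 <= k%:R * rho by rewrite mulr_ge0 ?ler0n // ltW.
  by rewrite -(ltr_nat R); move: hkl; rewrite /expo; lra.
have [C hC] := @logpow_succ_expansion _ (expo k l) m P nK
  (expo_ge0 k l (ltW rho_gt0)) (ltn_ord m).
have hb : P%:R <= expo k l + P.+1%:R.
  by rewrite -[leLHS]add0r lerD ?expo_ge0 ?ler_nat ?ltW.
apply: isBigO_le (isBigOZ C%:C (isBigO_logpow hb (leq_trans ml (ltnW lP)))).
exists (Ne R) => n hn; rewrite /rem -rmorphM !normc_real lecR.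
exact: le_trans (hC n hn) (ler_norm _).
Qed.

Definition Tidx := (Idx * 'I_P.+1 * 'I_nK + Idx)%type.

(* [inl (u, j, i)] is the term [logpow (expo k (l + j)) i] produced by the
   Taylor expansion of the term [u = (k, l, m)], [inr u] its [Delta] term. *)
Definition key (t : Tidx) : nat * nat * nat :=
  match t with
  | inl (u, j, i) => (u.1.1 : nat, (u.1.2 + j)%N, i : nat)
  | inr u => (u.1.1 : nat, u.1.2 : nat, u.2 : nat)
  end.

Definition coef (x1 x2 : nat) (t : Tidx) : R[i] :=
  match t with
  | inl (u, j, i) =>
      vP u.1.1 u.1.2 u.2 x1 x2 * (taylor_coef (expo u.1.1 u.1.2) u.2 j i)%:C
  | inr u => - (tc%:C * D (vP u.1.1 u.1.2 u.2) x1 x2)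
  end.

Lemma coef_sumE (x1 x2 n : nat) :
  \sum_(t : Tidx) coef x1 x2 t * (logpow (expo (key t).1.1 (key t).1.2) (key t).2 n)%:C =
  (expansion x1 x2 n.+1 - expansion x1 x2 n -
   tc%:C * D (fun y1 y2 => expansion y1 y2 n) x1 x2) -
  (expansion x1 x2 n.+1 - expansion x1 x2 n -
   \sum_(u : Idx) vP u.1.1 u.1.2 u.2 x1 x2 * (taylor_sum u.1.1 u.1.2 u.2 n)%:C).
Proof.
rewrite big_sumType /=.
have -> : \sum_(w : Idx * 'I_P.+1 * 'I_nK) coef x1 x2 (inl w) *
    (logpow (expo (key (inl w)).1.1 (key (inl w)).1.2) (key (inl w)).2 n)%:C =
    \sum_(u : Idx) vP u.1.1 u.1.2 u.2 x1 x2 * (taylor_sum u.1.1 u.1.2 u.2 n)%:C.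
  symmetry; rewrite /taylor_sum.
  under eq_bigr do rewrite rmorph_sum mulr_sumr.
  under eq_bigr do under eq_bigr do rewrite rmorph_sum mulr_sumr.
  rewrite pair_big pair_big /=; apply: eq_bigr => -[[u j] i] _ /=.
  by rewrite expoD rmorphM mulrA.
have -> : D (fun y1 y2 => expansion y1 y2 n) x1 x2 =
    \sum_(u : Idx) (logpow (expo u.1.1 u.1.2) u.2 n)%:C * D (vP u.1.1 u.1.2 u.2) x1 x2.
  rewrite -Delta_sum; congr Delta; do 2!apply/funext => ?.
  by apply: eq_bigr => u _; rewrite mulrC.
have -> : \sum_(u : Idx) coef x1 x2 (inr u) *
    (logpow (expo (key (inr u)).1.1 (key (inr u)).1.2) (key (inr u)).2 n)%:C =
    - (tc%:C * \sum_(u : Idx) (logpow (expo u.1.1 u.1.2) u.2 n)%:C *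
                                 D (vP u.1.1 u.1.2 u.2) x1 x2).
  by rewrite mulr_sumr -sumrN; apply: eq_bigr => u _ /=; ring.
set Ts := \sum_(u : Idx) _ * (taylor_sum _ _ _ n)%:C; set Ds := \sum_(u : Idx) _.
by set A1 := expansion x1 x2 n.+1; set A0 := expansion x1 x2 n; ring.
Qed.

Lemma coef_isBigO (x1 x2 : nat) : isBigO err (fun n =>
  \sum_(t : Tidx) coef x1 x2 t * (logpow (expo (key t).1.1 (key t).1.2) (key t).2 n)%:C).
Proof.
apply: isBigO_ext (isBigOD (expansion_defect x1 x2) (isBigON (expansion_taylor x1 x2))).
exact: coef_sumE.
Qed.

Lemma coef_sum_eq0 (x1 x2 k l i : nat) : expo k l < P%:R ->
  \sum_(t | key t == (k, l, i)) coef x1 x2 t = 0.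
Proof.
move=> hkl.
apply: (@logpow_coef_sum_eq0 _ _ _ key (fun k => expo k.1.1 k.1.2) (fun k => k.2)) => //.
- by move=> [[a b] c] [[a' b'] c'] /= /(expo_inj rho_irr) [-> ->] ->.
- exact: coef_isBigO.
- exact: hkl.
Qed.

Lemma Delta_vP (x1 x2 k l i : nat) : expo k l < P%:R -> (i < nK)%N ->
  tc%:C * D (vP k l i) x1 x2 =
  \sum_(w : Idx * 'I_P.+1 * 'I_nK | key (inl w) == (k, l, i)) coef x1 x2 (inl w).
Proof.
move=> hkl iK; have [kK lK] := expo_lt_nK hkl.
have := @coef_sum_eq0 x1 x2 k l i hkl; rewrite big_sumType /=.
rewrite (big_pred1 (Ordinal kK, Ordinal lK, Ordinal iK)); last first.
  by move=> [[a b] c]; rewrite /= !xpair_eqE.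
by move/eqP; rewrite addr_eq0 opprK => /eqP.
Qed.

Lemma vP_polyharmonic (k : nat) : (1 <= k)%N -> forall l i, (i <= l)%N ->
  expo k l < P%:R -> Delta_iter S omega tc (l - i).+1 (vP k l i) = (fun _ _ => 0).
Proof.
move=> k1 l; elim/ltn_ind: l => l IH i il hkl.
have tc0 : tc%:C != 0 :> R[i] by apply/eqP => -[] /eqP; rewrite gt_eqF.
pose c (w : Idx * 'I_P.+1 * 'I_nK) := let: (u, j, i') := w in
  tc%:C^-1 * (taylor_coef (expo u.1.1 u.1.2) u.2 j i')%:C.
pose f (w : Idx * 'I_P.+1 * 'I_nK) := let: (u, _, _) := w in vP u.1.1 u.1.2 u.2.
have D1 : D (vP k l i) =
    (fun y1 y2 => \sum_(w | key (inl w) == (k, l, i)) c w * f w y1 y2).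
  apply/funext => y1; apply/funext => y2; apply: (mulfI tc0).
  rewrite Delta_vP ?(leq_ltn_trans il (expo_lt_nK hkl).2) // mulr_sumr.
  by apply: eq_bigr => -[[u j] i'] _ /=; rewrite !mulrA mulfV // mul1r mulrC.
rewrite Delta_iterSr D1 Delta_iter_sum; apply/funext => y1; apply/funext => y2.
apply: big1 => -[[u j] i'] /eqP [ek el ei] /=.
rewrite /taylor_coef; case: ifP => [/andP[j0 im]|_]; last by rewrite mulr0 mul0r.
case hu : (admissible u.1.1 u.1.2 u.2); last by rewrite /vP hu Delta_iter0 mulr0.
move: hu => /and3P[_ ml hkl']; rewrite ek in hkl' *.
have lt : (u.1.2 < l)%N by rewrite -el -addn1 leq_add2l.
(* [l - i = u.1.2 + j - i'] exceeds [u.1.2 - u.2] as [0 < j] and [i' <= u.2]. *)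
have -> : (l - i = (l - i - (u.1.2 - u.2).+1) + (u.1.2 - u.2).+1)%N.
  rewrite subnK //; move: el ei im ml j0.
  by move: (u.1.2 : nat) (u.2 : nat) (j : nat) (i' : nat) => a b a' b'; lia.
by rewrite Delta_iterD (IH _ lt _ ml hkl') Delta_iter0 mulr0.
Qed.

End Polyharmonic.

Theorem lemma4p5 (R : realType) (S : seq step) (omega : step -> R) (tc rho : R)
  (q : nat -> nat -> nat -> R[i])
  (v : nat -> nat -> nat -> nat -> nat -> R[i]) :
  uniq S ->
  (forall s, s \in S -> 0 < omega s) ->
  0 < tc ->
  0 < rho ->
  (forall r : rat, rho != ratr r) ->
  (forall (x1 x2 n : nat),
     q x1 x2 n.+1 = \sum_(s <- S) (omega s)%:C *
                      ext0 (fun y1 y2 => q y1 y2 n) (x1%:Z - s.1) (x2%:Z - s.2)) ->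
  (forall p : R, 0 < p -> forall x1 x2 : nat,
     exists C : R, exists N : nat, forall n : nat, (N <= n)%N ->
       `| q x1 x2 n - ((tc ^- n)%:C * asym_sum rho p v x1 x2 n) |
         <= (C * tc ^- n * (ln (n%:R : R) / n%:R) `^ p)%:C) ->
  forall k l m : nat, (1 <= k)%N -> (m <= l)%N ->
    forall x1 x2 : nat, Delta_iter S omega tc (l - m).+1 (v k l m) x1 x2 = 0.
Proof.
move=> _ _ tc_gt0 rho_gt0 rho_irr q_rec q_asym k l m k_ge1 ml x1 x2.
pose P := (Num.truncn (expo rho k l)).+1.
have hP : expo rho k l < P%:R := truncnS_gt _.
have := vP_polyharmonic tc_gt0 rho_gt0 rho_irr q_rec q_asym (ltn0Sn _) k_ge1 ml hP.
by rewrite /vP /admissible k_ge1 ml hP => ->.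
Qed.
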